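(* Let $h\in C[0,1]$ and $q\in C[0,1]$ with $q>0$ on $(0,1)$. Let $(c_n)_n\subset\mathbb R$ with $c_n\to c\in\mathbb R$, and for each $n$ let $z_n\in C[0,1]\cap C^1(0,1)$ satisfy $\dot z_n(\varphi)=h(\varphi)-c_n-q(\varphi)/z_n(\varphi)$ and $z_n(\varphi)<0$ for $\varphi\in(0,1)$. Suppose either (a) $(z_n)_n$ is pointwise increasing in $n$ and there is $v\in C[0,1]$ with $z_n(\varphi)\le v(\varphi)<0$ for all $n$ and $\varphi\in(0,1)$; or (b) $(z_n)_n$ is pointwise decreasing in $n$ and there is $w\in C[0,1]$ with $z_n(\varphi)\ge w(\varphi)$ for all $n$ and $\varphi\in(0,1)$. Then $z_n$ converges uniformly on $[0,1]$ to some $\bar z\in C[0,1]\cap C^1(0,1)$ satisfying $\dot{\bar z}(\varphi)=h(\varphi)-c-q(\varphi)/\bar z(\varphi)$ and $\bar z(\varphi)<0$ for $\varphi\in(0,1)$. *)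

From Stdlib Require Import Reals Lra.
Open Scope R_scope.

Definition cont01 (f : R -> R) : Prop :=
  forall x, 0 <= x <= 1 ->
    forall eps, 0 < eps -> exists delta, 0 < delta /\
      forall y, 0 <= y <= 1 -> Rabs (y - x) < delta -> Rabs (f y - f x) < eps.

Definition C1_open01 (f : R -> R) : Prop :=
  exists f' : R -> R, forall x, 0 < x < 1 ->
    derivable_pt_lim f x (f' x) /\ continuity_pt f' x.

Definition unif_cv01 (u : nat -> R -> R) (g : R -> R) : Prop :=
  forall eps, 0 < eps -> exists N : nat, forall n, (N <= n)%nat ->
    forall x, 0 <= x <= 1 -> Rabs (u n x - g x) < eps.

From Stdlib Require Import Reals Lra Lia IndefiniteDescription.
Open Scope R_scope.

(* 1. Continuity toolkit for C[0,1] (continuity within [0,1]): via clamping,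
      boundedness, closure of inequalities from (0,1), monotonicity from the
      sign of the derivative.
   2. A priori modulus: for a negative solution, z + M t and z^2 + 2(MB+Q) t
      are nondecreasing, so a uniform bound on the data makes the family
      (z n) equicontinuous on [0,1].
   3. An equicontinuous family converging pointwise on [0,1] converges
      uniformly to a continuous limit.
   4. Below a continuous negative barrier, the right-hand sides converge
      uniformly near each interior point, so the limit solves the limiting
      equation (uniform convergence of derivatives).
   5. Each monotonicity hypothesis (a)/(b) supplies the barrier, the uniform
      bound and the pointwise limits (monotone bounded sequences); the
      theorem combines 2-5. *)

(* Clamping to [0,1]: it turns a function continuous within [0,1] into one
   continuous on all of R, so that the Stdlib continuity calculus applies. *)
Definition clamp01 (x : R) : R := Rmax 0 (Rmin 1 x).

Lemma clamp01_lipschitz x y : Rabs (clamp01 x - clamp01 y) <= Rabs (x - y).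
Proof.
  unfold clamp01, Rmax, Rmin; repeat destruct Rle_dec; unfold Rabs;
  repeat destruct Rcase_abs; lra.
Qed.

Lemma clamp01_range x : 0 <= clamp01 x <= 1.
Proof. unfold clamp01, Rmax, Rmin; repeat destruct Rle_dec; lra. Qed.

Lemma clamp01_id x : 0 <= x <= 1 -> clamp01 x = x.
Proof. intros; unfold clamp01, Rmax, Rmin; repeat destruct Rle_dec; lra. Qed.

Lemma cont01_clamp f : cont01 f -> forall x, continuity_pt (fun t => f (clamp01 t)) x.
Proof.
  intros Hf x eps Heps; simpl; unfold R_dist.
  destruct (Hf (clamp01 x) (clamp01_range x) eps Heps) as [d [Hd H]].
  exists d; split; [lra|]. intros y [_ Hy]. apply H; [apply clamp01_range|].
  eapply Rle_lt_trans; [apply clamp01_lipschitz | exact Hy].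
Qed.

Lemma clamp_cont01 f : (forall x, continuity_pt (fun t => f (clamp01 t)) x) -> cont01 f.
Proof.
  intros H x Hx eps Heps.
  destruct (H x eps Heps) as [d [Hd Hd']]; simpl in Hd'; unfold R_dist in Hd'.
  exists d; split; [lra|]. intros y Hy Hyx.
  destruct (Req_dec y x) as [->|Hne]; [rewrite Rminus_diag, Rabs_R0; lra|].
  specialize (Hd' y). rewrite (clamp01_id y Hy), (clamp01_id x Hx) in Hd'.
  apply Hd'. split; [split; [constructor | auto] | exact Hyx].
Qed.

Lemma cont01_plus f g : cont01 f -> cont01 g -> cont01 (fun x => f x + g x).
Proof.
  intros Hf Hg. apply clamp_cont01. intro x.
  exact (continuity_pt_plus _ _ x (cont01_clamp f Hf x) (cont01_clamp g Hg x)).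
Qed.

Lemma cont01_mult f g : cont01 f -> cont01 g -> cont01 (fun x => f x * g x).
Proof.
  intros Hf Hg. apply clamp_cont01. intro x.
  exact (continuity_pt_mult _ _ x (cont01_clamp f Hf x) (cont01_clamp g Hg x)).
Qed.

Lemma cont01_const a : cont01 (fun _ => a).
Proof.
  intros x _ eps He. exists 1. split; [lra|].
  intros. rewrite Rminus_diag, Rabs_R0. lra.
Qed.

Lemma cont01_id : cont01 (fun x => x).
Proof. intros x _ eps He. exists eps. split; [lra|]. intros. lra. Qed.

Lemma cont01_bounded f : cont01 f -> exists B, forall x, 0 <= x <= 1 -> Rabs (f x) <= B.
Proof.
  intros Hf.
  destruct (continuity_ab_maj (fun t => Rabs (f (clamp01 t))) 0 1 ltac:(lra))
    as [m [Hm _]].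
  { intros c _. exact (continuity_pt_comp _ Rabs c (cont01_clamp f Hf c)
                         (Rcontinuity_abs _)). }
  exists (Rabs (f (clamp01 m))). intros x Hx.
  specialize (Hm x Hx); simpl in Hm. rewrite clamp01_id in Hm; auto.
Qed.

Lemma cont01_interior f y : cont01 f -> 0 < y < 1 -> continuity_pt f y.
Proof.
  intros Hf Hy eps Heps; simpl; unfold R_dist.
  destruct (Hf y ltac:(lra) eps Heps) as [d [Hd H]].
  assert (Hr : 0 < Rmin d (Rmin y (1 - y))).
  { apply Rmin_glb_lt; [lra | apply Rmin_glb_lt; lra]. }
  exists (Rmin d (Rmin y (1 - y))); split; [exact Hr|].
  intros t [_ Ht].
  assert (h1 := Rmin_l d (Rmin y (1 - y))). assert (h2 := Rmin_r d (Rmin y (1 - y))).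
  assert (h3 := Rmin_l y (1 - y)). assert (h4 := Rmin_r y (1 - y)).
  revert Ht; unfold Rabs at 1; destruct Rcase_abs; intro Ht;
    (apply H; [split; lra | unfold Rabs; destruct Rcase_abs; lra]).
Qed.

Lemma open_interval_dense a b x delta : a < b -> a <= x <= b -> 0 < delta ->
  exists t, a < t < b /\ Rabs (t - x) < delta.
Proof.
  intros Hab Hx Hd.
  set (s := Rmin delta (b - a) / 4).
  assert (Hs : 0 < s /\ s < delta /\ 4 * s <= b - a).
  { assert (h1 := Rmin_l delta (b - a)). assert (h2 := Rmin_r delta (b - a)).
    assert (0 < Rmin delta (b - a)) by (apply Rmin_glb_lt; lra).
    unfold s; lra. }
  destruct (Rle_dec x ((a + b) / 2)).
  - exists (x + s). split; [lra|]. rewrite Rabs_right; lra.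
  - exists (x - s). split; [lra|]. rewrite Rabs_left; lra.
Qed.

Lemma cont01_le_closure f g a b : cont01 f -> cont01 g -> 0 <= a -> a < b -> b <= 1 ->
  (forall x, a < x < b -> f x <= g x) -> forall x, a <= x <= b -> f x <= g x.
Proof.
  intros Hf Hg Ha Hab Hb H x Hx.
  destruct (Rle_dec (f x) (g x)) as [|Hn]; [assumption|]. exfalso.
  apply Rnot_le_lt in Hn. set (e := (f x - g x) / 2).
  destruct (Hf x ltac:(lra) e ltac:(unfold e; lra)) as [d1 [Hd1 H1]].
  destruct (Hg x ltac:(lra) e ltac:(unfold e; lra)) as [d2 [Hd2 H2]].
  destruct (open_interval_dense a b x (Rmin d1 d2) Hab Hx) as [t [Ht Htx]].
  { apply Rmin_glb_lt; lra. }
  assert (h1 := Rmin_l d1 d2). assert (h2 := Rmin_r d1 d2).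
  specialize (H1 t ltac:(lra) ltac:(lra)). specialize (H2 t ltac:(lra) ltac:(lra)).
  specialize (H t Ht).
  revert H1 H2; unfold e, Rabs; repeat destruct Rcase_abs; lra.
Qed.

Lemma cont01_le f g : cont01 f -> cont01 g ->
  (forall x, 0 < x < 1 -> f x <= g x) -> forall x, 0 <= x <= 1 -> f x <= g x.
Proof.
  intros Hf Hg H. exact (cont01_le_closure f g 0 1 Hf Hg ltac:(lra) ltac:(lra) ltac:(lra) H).
Qed.

(* Monotonicity from the sign of the derivative, for a function in C[0,1]
   differentiable in (0,1): the mean value theorem on interior subintervals,
   then closure to the endpoints. *)
Lemma cont01_nondecreasing g g' : cont01 g ->
  (forall t, 0 < t < 1 -> derivable_pt_lim g t (g' t)) ->
  (forall t, 0 < t < 1 -> 0 <= g' t) ->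
  forall x y, 0 <= x -> x <= y -> y <= 1 -> g x <= g y.
Proof.
  intros Hg Hgd Hg'.
  assert (Interior : forall x y, 0 < x -> x < y -> y < 1 -> g x <= g y).
  { intros x y Hx Hxy Hy.
    destruct (MVT_cor2 g g' x y Hxy) as [c [Hc Hcr]].
    { intros c Hc. apply Hgd. lra. }
    assert (0 <= g' c) by (apply Hg'; lra).
    assert (0 <= g' c * (y - x)) by (apply Rmult_le_pos; lra). lra. }
  assert (LeftEnd : forall y, 0 < y < 1 -> forall x, 0 <= x <= y -> g x <= g y).
  { intros y Hy. apply (cont01_le_closure g (fun _ => g y) 0 y Hg (cont01_const _));
      try lra.
    intros x Hx. apply Interior; lra. }
  intros x y Hx Hxy Hy.
  destruct (Req_dec x y) as [->|Hne]; [lra|].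
  apply (cont01_le_closure (fun _ => g x) g x 1 (cont01_const _) Hg); try lra.
  intros t Ht. apply LeftEnd; lra.
Qed.

Lemma cv_const (a : R) : Un_cv (fun _ => a) a.
Proof. intros eps He. exists 0%nat. intros. unfold R_dist. rewrite Rminus_diag, Rabs_R0. lra. Qed.

Lemma cv_bounded (u : nat -> R) l : Un_cv u l -> exists C, forall n, Rabs (u n) <= C.
Proof.
  intros Hu.
  destruct (cauchy_bound _ (CV_Cauchy _ (exist _ _ (cv_cvabs _ _ Hu)))) as [C HC].
  exists C. intro n. apply HC. exists n. reflexivity.
Qed.

Lemma cv_dist_le (u w : nat -> R) l1 l2 e : Un_cv u l1 -> Un_cv w l2 ->
  (forall n, Rabs (u n - w n) <= e) -> Rabs (l1 - l2) <= e.
Proof.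
  intros Hu Hw He.
  apply (Rle_cv_lim He); [| apply cv_const].
  exact (cv_cvabs _ _ (CV_minus _ _ _ _ Hu Hw)).
Qed.

Section RiccatiModulus.
Variables (z h q : R -> R) (a M Q B : R).
Hypothesis z_cont : cont01 z.
Hypothesis z_ode : forall x, 0 < x < 1 -> derivable_pt_lim z x (h x - a - q x / z x).
Hypothesis z_neg : forall x, 0 < x < 1 -> z x < 0.
Hypothesis q_bound : forall x, 0 < x < 1 -> 0 < q x <= Q.
Hypothesis h_bound : forall x, 0 < x < 1 -> Rabs (h x - a) <= M.
Hypothesis z_bound : forall x, 0 < x < 1 -> Rabs (z x) <= B.

(* Since -q/z > 0, the slope of z is at least -M: z + M t is nondecreasing. *)
Lemma riccati_drift x y : 0 <= x -> x <= y -> y <= 1 -> z x + M * x <= z y + M * y.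
Proof.
  apply (cont01_nondecreasing (fun t => z t + M * t)
           (fun t => h t - a - q t / z t + M * 1)).
  - exact (cont01_plus _ _ z_cont (cont01_mult _ _ (cont01_const M) cont01_id)).
  - intros t Ht. exact (derivable_pt_lim_plus _ _ _ _ _ (z_ode t Ht)
      (derivable_pt_lim_scal id M t 1 (derivable_pt_lim_id t))).
  - intros t Ht.
    assert (Hz := z_neg t Ht). assert (Hq := q_bound t Ht). assert (Hh := h_bound t Ht).
    assert (/ z t < 0) by (apply Rinv_lt_0_compat; lra).
    assert (q t / z t < 0) by (unfold Rdiv; nra).
    revert Hh; unfold Rabs; destruct Rcase_abs; lra.
Qed.

(* (z^2)' = 2((h - a) z - q) >= -2(MB + Q): z^2 + 2(MB+Q) t is nondecreasing. *)
Lemma riccati_energy x y : 0 <= x -> x <= y -> y <= 1 ->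
  z x * z x + 2 * (M * B + Q) * x <= z y * z y + 2 * (M * B + Q) * y.
Proof.
  apply (cont01_nondecreasing (fun t => z t * z t + 2 * (M * B + Q) * t)
    (fun t => ((h t - a - q t / z t) * z t + z t * (h t - a - q t / z t))
              + 2 * (M * B + Q) * 1)).
  - exact (cont01_plus _ _ (cont01_mult _ _ z_cont z_cont)
             (cont01_mult _ _ (cont01_const _) cont01_id)).
  - intros t Ht. exact (derivable_pt_lim_plus _ _ _ _ _
      (derivable_pt_lim_mult _ _ _ _ _ (z_ode t Ht) (z_ode t Ht))
      (derivable_pt_lim_scal id _ t 1 (derivable_pt_lim_id t))).
  - intros t Ht.
    assert (Hz := z_neg t Ht). assert (Hq := q_bound t Ht).
    assert (Hh := h_bound t Ht). assert (HB := z_bound t Ht).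
    replace ((h t - a - q t / z t) * z t + z t * (h t - a - q t / z t))
      with (2 * ((h t - a) * z t - q t)) by (field; lra).
    assert (Rabs ((h t - a) * z t) <= M * B).
    { rewrite Rabs_mult. apply Rmult_le_compat; auto using Rabs_pos. }
    revert H; unfold Rabs; destruct Rcase_abs; lra.
Qed.

(* The a priori modulus of continuity: a decrease of z over [x,y] is
   controlled by the drift bound, an increase by the energy bound, because
   for z x <= z y <= 0 one has (z x - z y)^2 <= z x^2 - z y^2. *)
Lemma riccati_modulus x y : 0 <= x -> x <= y -> y <= 1 ->
  Rabs (z x - z y) <= M * (y - x) \/
  (z x - z y) * (z x - z y) <= 2 * (M * B + Q) * (y - x).
Proof.
  intros Hx Hxy Hy.
  assert (Hnonpos : forall t, 0 <= t <= 1 -> z t <= 0).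
  { apply (cont01_le z (fun _ => 0) z_cont (cont01_const 0)).
    intros s Hs. specialize (z_neg s Hs); lra. }
  assert (Drift := riccati_drift x y Hx Hxy Hy).
  assert (Energy := riccati_energy x y Hx Hxy Hy).
  assert (zx := Hnonpos x ltac:(lra)). assert (zy := Hnonpos y ltac:(lra)).
  destruct (Rle_dec (z y) (z x)).
  - left. rewrite Rabs_right by lra. lra.
  - right. nra.
Qed.

End RiccatiModulus.

Lemma modulus_small (M K : R) : 0 <= M -> 0 <= K -> forall eps, 0 < eps ->
  exists d, 0 < d /\ forall t D, 0 <= t < d ->
    (Rabs D <= M * t \/ D * D <= 2 * K * t) -> Rabs D < eps.
Proof.
  intros HM HK eps He.
  exists (Rmin (eps / (M + 1)) (eps * eps / (2 * K + 1))). split.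
  { apply Rmin_glb_lt; apply Rdiv_lt_0_compat; nra. }
  intros t D Ht HD.
  assert (h1 := Rmin_l (eps / (M + 1)) (eps * eps / (2 * K + 1))).
  assert (h2 := Rmin_r (eps / (M + 1)) (eps * eps / (2 * K + 1))).
  destruct HD as [HD|HD].
  - assert (Ht' : t * (M + 1) < eps).
    { assert (Hlt : t < eps / (M + 1)) by lra.
      apply (Rmult_lt_compat_r (M + 1)) in Hlt; [|lra].
      replace (eps / (M + 1) * (M + 1)) with eps in Hlt by (field; lra). lra. }
    nra.
  - assert (Ht' : t * (2 * K + 1) < eps * eps).
    { assert (Hlt : t < eps * eps / (2 * K + 1)) by lra.
      apply (Rmult_lt_compat_r (2 * K + 1)) in Hlt; [|lra].
      replace (eps * eps / (2 * K + 1) * (2 * K + 1)) with (eps * eps) in Hlt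
        by (field; lra). lra. }
    assert (D * D < eps * eps) by nra.
    unfold Rabs; destruct Rcase_abs; nra.
Qed.

Definition equicont01 (u : nat -> R -> R) : Prop :=
  forall eps, 0 < eps -> exists d, 0 < d /\ forall n x y,
    0 <= x <= 1 -> 0 <= y <= 1 -> Rabs (x - y) < d -> Rabs (u n x - u n y) < eps.

Lemma equicont01_cont01 u n : equicont01 u -> cont01 (u n).
Proof.
  intros Hu x Hx eps He. destruct (Hu eps He) as [d [Hd Hdd]].
  exists d; split; [exact Hd|]. intros y Hy Hyx. exact (Hdd n y x Hy Hx Hyx).
Qed.

Lemma riccati_equicontinuous (z : nat -> R -> R) (h q : R -> R) (a : nat -> R)
    (M Q B : R) :
  (forall n, cont01 (z n)) ->
  (forall n x, 0 < x < 1 -> derivable_pt_lim (z n) x (h x - a n - q x / z n x)) ->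
  (forall n x, 0 < x < 1 -> z n x < 0) ->
  (forall x, 0 < x < 1 -> 0 < q x <= Q) ->
  (forall n x, 0 < x < 1 -> Rabs (h x - a n) <= M) ->
  (forall n x, 0 < x < 1 -> Rabs (z n x) <= B) ->
  equicont01 z.
Proof.
  intros Hc Hode Hneg Hq Hh HB eps He.
  assert (HM : 0 <= M) by (eapply Rle_trans; [apply Rabs_pos | apply (Hh 0%nat (1/2)); lra]).
  assert (HB0 : 0 <= B) by (eapply Rle_trans; [apply Rabs_pos | apply (HB 0%nat (1/2)); lra]).
  assert (HQ : 0 <= Q) by (assert (Hq' := Hq (1/2) ltac:(lra)); lra).
  destruct (modulus_small M (M * B + Q) HM ltac:(nra) eps He) as [d [Hd Hsmall]].
  exists d; split; [exact Hd|]. intros n x y Hx Hy Hxy.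
  assert (Hmod := riccati_modulus (z n) h q (a n) M Q B (Hc n) (Hode n) (Hneg n) Hq
                    (Hh n) (HB n)).
  destruct (Rle_dec x y).
  - apply (Hsmall (y - x)); [| apply Hmod; lra].
    revert Hxy; unfold Rabs; destruct Rcase_abs; lra.
  - rewrite Rabs_minus_sym. apply (Hsmall (x - y)); [| apply Hmod; lra].
    revert Hxy; unfold Rabs; destruct Rcase_abs; lra.
Qed.

Lemma eventually_finite_conj (P : nat -> nat -> Prop) m :
  (forall k, (k <= m)%nat -> exists N0, forall n, (N0 <= n)%nat -> P k n) ->
  exists N0, forall k, (k <= m)%nat -> forall n, (N0 <= n)%nat -> P k n.
Proof.
  induction m as [|m IH]; intros H.
  - destruct (H 0%nat (le_n _)) as [N0 HN]. exists N0. intros k Hk n Hn.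
    replace k with 0%nat by lia. auto.
  - destruct IH as [N1 H1]; [intros k Hk; apply H; lia|].
    destruct (H (S m) (le_n _)) as [N2 H2]. exists (N1 + N2)%nat.
    intros k Hk n Hn. destruct (Nat.eq_dec k (S m)) as [->|].
    + apply H2; lia.
    + apply H1; lia.
Qed.

Lemma grid_dense (N : nat) : (0 < N)%nat -> forall m x, 0 <= x <= INR m / INR N ->
  exists k, (k <= m)%nat /\ Rabs (x - INR k / INR N) <= / INR N.
Proof.
  intros HN. assert (HN' : 0 < INR N) by (apply lt_0_INR; auto).
  induction m as [|m IH]; intros x Hx.
  - exists 0%nat. split; [lia|]. simpl in *. unfold Rdiv in *.
    rewrite Rmult_0_l in *. replace x with 0 by lra.
    rewrite Rminus_diag, Rabs_R0. left; apply Rinv_0_lt_compat; auto.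
  - destruct (Rle_dec x (INR m / INR N)).
    + destruct (IH x ltac:(lra)) as [k [Hk Hk']]. exists k; split; [lia | auto].
    + exists (S m). split; [lia|]. rewrite S_INR in *.
      replace ((INR m + 1) / INR N) with (INR m / INR N + / INR N) in * by (field; lra).
      unfold Rabs; destruct Rcase_abs; lra.
Qed.

Section EquicontinuousLimit.
Variables (u : nat -> R -> R) (g : R -> R).
Hypothesis u_equicont : equicont01 u.
Hypothesis u_cv : forall x, 0 <= x <= 1 -> Un_cv (fun n => u n x) (g x).

Lemma equicont_limit : equicont01 (fun _ => g).
Proof.
  intros eps He. destruct (u_equicont (eps / 2) ltac:(lra)) as [d [Hd Hdd]].
  exists d; split; [exact Hd|]. intros _ x y Hx Hy Hxy.
  assert (Rabs (g x - g y) <= eps / 2); [|lra].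
  apply (cv_dist_le (fun n => u n x) (fun n => u n y)); auto.
  intro n; left; apply Hdd; auto.
Qed.

(* Pointwise convergence on a finite 1/N-grid, plus equicontinuity of the
   u n and of g, gives uniform convergence (an eps/3 argument). *)
Lemma equicont_uniform : unif_cv01 u g.
Proof.
  intros eps He.
  destruct (u_equicont (eps / 3) ltac:(lra)) as [d [Hd Hdd]].
  destruct (equicont_limit (eps / 3) ltac:(lra)) as [d' [Hd' Hdd']].
  destruct (archimed_cor1 (Rmin d d')) as [N [HN HN0]]; [apply Rmin_glb_lt; auto|].
  assert (HNr : 0 < INR N) by (apply lt_0_INR; lia).
  set (node k := INR k / INR N).
  assert (Hnode : forall k, (k <= N)%nat -> 0 <= node k <= 1).
  { intros k Hk. apply le_INR in Hk. assert (0 <= INR k) by apply pos_INR.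
    unfold node; split; [apply Rmult_le_pos; [lra | left; apply Rinv_0_lt_compat; lra]|].
    apply (Rmult_le_reg_r (INR N)); auto.
    replace (INR k / INR N * INR N) with (INR k) by (field; lra). lra. }
  destruct (eventually_finite_conj (fun k n => (k <= N)%nat ->
      Rabs (u n (node k) - g (node k)) < eps / 3) N) as [N0 HN0'].
  { intros k Hk. destruct (u_cv _ (Hnode k Hk) (eps / 3) ltac:(lra)) as [N1 HN1].
    exists N1. intros n Hn _. apply HN1; lia. }
  exists N0. intros n Hn x Hx.
  destruct (grid_dense N HN0 N x) as [k [Hk Hkx]].
  { replace (INR N / INR N) with 1 by (field; lra). lra. }
  fold (node k) in Hkx.
  assert (Hm1 := Rmin_l d d'). assert (Hm2 := Rmin_r d d').
  assert (A := HN0' k Hk n Hn Hk).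
  assert (B := Hdd n x (node k) Hx (Hnode k Hk) ltac:(lra)).
  assert (C := Hdd' n (node k) x (Hnode k Hk) Hx ltac:(rewrite Rabs_minus_sym; lra)).
  revert A B C. generalize (u n x) (g x) (u n (node k)) (g (node k)).
  intros a1 a2 a3 a4. unfold Rabs; repeat destruct Rcase_abs; lra.
Qed.

End EquicontinuousLimit.

Lemma equicont_uniform_limit u : equicont01 u ->
  (forall x, 0 <= x <= 1 -> exists l, Un_cv (fun n => u n x) l) ->
  exists g, unif_cv01 u g /\ cont01 g /\
            forall x, 0 <= x <= 1 -> Un_cv (fun n => u n x) (g x).
Proof.
  intros Hu Hlim.
  assert (Hch : forall x, exists l, 0 <= x <= 1 -> Un_cv (fun n => u n x) l).
  { intro x. destruct (Rle_dec 0 x); [destruct (Rle_dec x 1)|].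
    - destruct (Hlim x) as [l Hl]; [lra|]. exists l; auto.
    - exists 0; intros; lra.
    - exists 0; intros; lra. }
  destruct (functional_choice _ Hch) as [g Hg].
  exists g. split; [exact (equicont_uniform u g Hu Hg)|]. split; [|exact Hg].
  exact (equicont01_cont01 _ 0%nat (equicont_limit u g Hu Hg)).
Qed.

Lemma div_lipschitz (p a b m Q : R) : 0 < m -> a <= - m -> b <= - m -> 0 <= p <= Q ->
  Rabs (p / a - p / b) <= Q * Rabs (b - a) / (m * m).
Proof.
  intros Hm Ha Hb Hp.
  replace (p / a - p / b) with (p * (b - a) * / (a * b)) by (field; split; lra).
  rewrite Rabs_mult, Rabs_mult, Rabs_inv.
  rewrite (Rabs_right (a * b)) by nra. rewrite (Rabs_right p) by lra.
  unfold Rdiv. rewrite !Rmult_assoc.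
  apply Rmult_le_compat; try lra.
  - apply Rmult_le_pos; [apply Rabs_pos | left; apply Rinv_0_lt_compat; nra].
  - apply Rmult_le_compat_l; [apply Rabs_pos|]. apply Rinv_le_contravar; nra.
Qed.

Lemma negative_ball u x0 : cont01 u -> 0 < x0 < 1 -> u x0 < 0 ->
  exists r : posreal, forall y, Boule x0 r y -> 0 < y < 1 /\ u y <= u x0 / 2.
Proof.
  intros Hu Hx0 Hneg.
  destruct (Hu x0 ltac:(lra) (- u x0 / 2) ltac:(lra)) as [d [Hd Hdd]].
  assert (Hr : 0 < Rmin d (Rmin x0 (1 - x0)) / 2).
  { assert (0 < Rmin d (Rmin x0 (1 - x0))); [|lra].
    apply Rmin_glb_lt; [lra | apply Rmin_glb_lt; lra]. }
  exists (mkposreal _ Hr). intros y Hy. unfold Boule in Hy; simpl in Hy.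
  assert (h1 := Rmin_l d (Rmin x0 (1 - x0))). assert (h2 := Rmin_r d (Rmin x0 (1 - x0))).
  assert (h3 := Rmin_l x0 (1 - x0)). assert (h4 := Rmin_r x0 (1 - x0)).
  assert (Hy01 : 0 < y < 1) by (revert Hy; unfold Rabs; destruct Rcase_abs; lra).
  split; [exact Hy01|].
  assert (A := Hdd y ltac:(lra) ltac:(lra)).
  revert A; unfold Rabs; destruct Rcase_abs; lra.
Qed.

Section LimitEquation.
Variables (z : nat -> R -> R) (zb h q u : R -> R) (cs : nat -> R) (c Q : R).
Hypothesis cs_cv : Un_cv cs c.
Hypothesis z_unif : unif_cv01 z zb.
Hypothesis z_cv : forall x, 0 <= x <= 1 -> Un_cv (fun n => z n x) (zb x).
Hypothesis z_ode : forall n x, 0 < x < 1 ->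
  derivable_pt_lim (z n) x (h x - cs n - q x / z n x).
Hypothesis q_bound : forall x, 0 < x < 1 -> 0 <= q x <= Q.
Hypothesis u_cont : cont01 u.
Hypothesis z_barrier : forall n x, 0 < x < 1 -> z n x <= u x.
Hypothesis zb_barrier : forall x, 0 < x < 1 -> zb x <= u x.

(* Where the barrier is at most -m < 0, the right-hand sides converge
   uniformly, since q/z is Lipschitz in z there. *)
Lemma rhs_uniform (S : R -> Prop) (m : R) : 0 < m ->
  (forall y, S y -> 0 < y < 1 /\ u y <= - m) ->
  forall eps, 0 < eps -> exists N, forall n y, (N <= n)%nat -> S y ->
    Rabs ((h y - c - q y / zb y) - (h y - cs n - q y / z n y)) < eps.
Proof.
  intros Hm HS eps He.
  assert (HQ : 0 <= Q).
  { destruct (q_bound (1/2) ltac:(lra)); lra. }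
  destruct (cs_cv (eps / 2) ltac:(lra)) as [N1 HN1].
  set (e0 := eps * (m * m) / (2 * (Q + 1))).
  assert (He0 : 0 < e0).
  { unfold e0. apply Rdiv_lt_0_compat; [apply Rmult_lt_0_compat; nra | lra]. }
  destruct (z_unif e0 He0) as [N2 HN2].
  exists (N1 + N2)%nat. intros n y Hn Hy. destruct (HS y Hy) as [Hy01 Huy].
  specialize (HN1 n ltac:(lia)). unfold R_dist in HN1.
  specialize (HN2 n ltac:(lia) y ltac:(lra)).
  assert (Hzn := z_barrier n y Hy01). assert (Hzb := zb_barrier y Hy01).
  assert (Hdiv := div_lipschitz (q y) (z n y) (zb y) m Q Hm ltac:(lra) ltac:(lra)
                    (q_bound y Hy01)).
  assert (Hsmall : Q * Rabs (zb y - z n y) / (m * m) < eps / 2).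
  { rewrite Rabs_minus_sym.
    apply (Rmult_lt_reg_r (m * m)); [nra|].
    replace (Q * Rabs (z n y - zb y) / (m * m) * (m * m))
      with (Q * Rabs (z n y - zb y)) by (field; lra).
    assert (Q * Rabs (z n y - zb y) <= Q * e0) by (apply Rmult_le_compat_l; lra).
    assert (e0 * (2 * (Q + 1)) = eps * (m * m)) by (unfold e0; field; lra).
    nra. }
  replace (h y - c - q y / zb y - (h y - cs n - q y / z n y))
    with ((cs n - c) + (q y / z n y - q y / zb y)) by ring.
  eapply Rle_lt_trans; [apply Rabs_triang|]. lra.
Qed.

(* The uniform limit solves the limiting equation wherever the barrier is
   negative: uniform convergence of derivatives (CVU_derivable) on a ball. *)
Lemma limit_solves_ode x0 : 0 < x0 < 1 -> u x0 < 0 ->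
  derivable_pt_lim zb x0 (h x0 - c - q x0 / zb x0).
Proof.
  intros Hx0 Hneg.
  destruct (negative_ball u x0 u_cont Hx0 Hneg) as [r Hball].
  apply (CVU_derivable z (fun n y => h y - cs n - q y / z n y) zb
           (fun y => h y - c - q y / zb y) x0 r).
  - intros eps He.
    assert (Hball' : forall y, Boule x0 r y -> 0 < y < 1 /\ u y <= - (- u x0 / 2)).
    { intros y Hy. destruct (Hball y Hy). split; [assumption | lra]. }
    destruct (rhs_uniform _ (- u x0 / 2) ltac:(lra) Hball' eps He) as [N HN].
    exists N. intros n y Hn Hy. exact (HN n y Hn Hy).
  - intros y Hy. apply z_cv. destruct (Hball y Hy); lra.
  - intros n y Hy. apply z_ode. apply Hball; auto.
  - unfold Boule. rewrite Rminus_diag, Rabs_R0. apply cond_pos.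
Qed.

End LimitEquation.

(* What each monotonicity hypothesis provides: a continuous negative barrier
   u above every z n, a uniform bound B on |z n|, and pointwise limits. *)
Record controlled_family (z : nat -> R -> R) (u : R -> R) (B : R) : Prop := {
  barrier_cont : cont01 u;
  barrier_neg : forall x, 0 < x < 1 -> u x < 0;
  below_barrier : forall n x, 0 < x < 1 -> z n x <= u x;
  uniform_bound : forall n x, 0 < x < 1 -> Rabs (z n x) <= B;
  pointwise_cv : forall x, 0 <= x <= 1 -> exists l, Un_cv (fun n => z n x) l }.

Lemma limit_below_barrier z u B zb : controlled_family z u B ->
  (forall x, 0 <= x <= 1 -> Un_cv (fun n => z n x) (zb x)) ->
  forall x, 0 < x < 1 -> zb x <= u x /\ zb x < 0.
Proof.
  intros Hctl Hcv x Hx.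
  assert (Hle : zb x <= u x).
  { exact (Rle_cv_lim (Vn := fun _ => u x) (fun n => below_barrier _ _ _ Hctl n x Hx)
             (Hcv x ltac:(lra)) (cv_const _)). }
  assert (A := barrier_neg _ _ _ Hctl x Hx). lra.
Qed.

Section MonotoneFamilies.
Variable z : nat -> R -> R.
Hypothesis z_cont : forall n, cont01 (z n).
Hypothesis z_neg : forall n x, 0 < x < 1 -> z n x < 0.

Lemma family_nonpos n x : 0 <= x <= 1 -> z n x <= 0.
Proof.
  apply (cont01_le (z n) (fun _ => 0) (z_cont n) (cont01_const 0)).
  intros t Ht. specialize (z_neg n t Ht). lra.
Qed.

(* Case (a): an increasing sequence below a negative continuous v; it is
   bounded below by z 0 and converges pointwise, being bounded above by 0. *)
Lemma increasing_controlled v :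
  (forall n x, 0 < x < 1 -> z n x <= z (S n) x) -> cont01 v ->
  (forall n x, 0 < x < 1 -> z n x <= v x /\ v x < 0) ->
  exists B, controlled_family z v B.
Proof.
  intros Hup Hv Hvb.
  assert (Hgrow : forall x, 0 <= x <= 1 -> Un_growing (fun n => z n x)).
  { intros x Hx n. exact (cont01_le _ _ (z_cont n) (z_cont (S n)) (Hup n) x Hx). }
  destruct (cont01_bounded (z 0%nat) (z_cont 0%nat)) as [B HB].
  exists B. split.
  - exact Hv.
  - intros x Hx. exact (proj2 (Hvb 0%nat x Hx)).
  - intros n x Hx. exact (proj1 (Hvb n x Hx)).
  - intros n x Hx.
    assert (H0n := growing_prop _ n 0 (Hgrow x ltac:(lra)) ltac:(lia)).
    assert (A1 := z_neg n x Hx). assert (A2 := HB x ltac:(lra)).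
    revert A2; unfold Rabs; repeat destruct Rcase_abs; lra.
  - intros x Hx.
    assert (Hub : has_ub (fun n => z n x)).
    { exists 0. intros y [i ->]. exact (family_nonpos i x Hx). }
    destruct (growing_cv _ (Hgrow x Hx) Hub) as [l Hl]. exists l; exact Hl.
Qed.

(* Case (b): a decreasing sequence above a continuous w; z 0 itself is the
   barrier, and the sequence converges pointwise, being bounded below by w. *)
Lemma decreasing_controlled w :
  (forall n x, 0 < x < 1 -> z (S n) x <= z n x) -> cont01 w ->
  (forall n x, 0 < x < 1 -> w x <= z n x) ->
  exists B, controlled_family z (z 0%nat) B.
Proof.
  intros Hdown Hw Hwb.
  assert (Hdec : forall x, 0 <= x <= 1 -> Un_decreasing (fun n => z n x)).
  { intros x Hx n. exact (cont01_le _ _ (z_cont (S n)) (z_cont n) (Hdown n) x Hx). }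
  destruct (cont01_bounded w Hw) as [B HB].
  exists B. split.
  - exact (z_cont 0%nat).
  - exact (z_neg 0%nat).
  - intros n x Hx. exact (decreasing_prop _ 0 n (Hdec x ltac:(lra)) ltac:(lia)).
  - intros n x Hx.
    assert (A1 := Hwb n x Hx). assert (A2 := z_neg n x Hx). assert (A3 := HB x ltac:(lra)).
    revert A3; unfold Rabs; repeat destruct Rcase_abs; lra.
  - intros x Hx.
    assert (Hlb : has_lb (fun n => z n x)).
    { exists (- w x). intros y [i ->]. unfold opp_seq.
      assert (w x <= z i x); [|lra].
      exact (cont01_le w (z i) Hw (z_cont i) (Hwb i) x Hx). }
    destruct (decreasing_cv _ (Hdec x Hx) Hlb) as [l Hl]. exists l; exact Hl.
Qed.

End MonotoneFamilies.

Lemma rhs_continuous (h q zb : R -> R) (c x : R) :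
  cont01 h -> cont01 q -> cont01 zb -> 0 < x < 1 -> zb x <> 0 ->
  continuity_pt (fun y => h y - c - q y / zb y) x.
Proof.
  intros Hh Hq Hzb Hx Hne.
  apply continuity_pt_minus; [apply continuity_pt_minus|].
  - exact (cont01_interior h x Hh Hx).
  - exact (continuity_pt_const (fun _ => c) x (fun _ _ => eq_refl)).
  - exact (continuity_pt_div _ _ x (cont01_interior q x Hq Hx)
             (cont01_interior zb x Hzb Hx) Hne).
Qed.

Theorem lemma3p3
  (h q : R -> R) (cs : nat -> R) (c : R) (z : nat -> R -> R)
  (Hh : cont01 h) (Hq : cont01 q)
  (Hqpos : forall x, 0 < x < 1 -> 0 < q x)
  (Hcs : Un_cv cs c)
  (Hzc : forall n, cont01 (z n))
  (Hz1 : forall n, C1_open01 (z n))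
  (Hzode : forall n x, 0 < x < 1 ->
      derivable_pt_lim (z n) x (h x - cs n - q x / z n x))
  (Hzneg : forall n x, 0 < x < 1 -> z n x < 0)
  (Hcase :
     ((forall n x, 0 < x < 1 -> z n x <= z (S n) x) /\
      exists v : R -> R, cont01 v /\
        forall n x, 0 < x < 1 -> z n x <= v x /\ v x < 0)
     \/
     ((forall n x, 0 < x < 1 -> z (S n) x <= z n x) /\
      exists w : R -> R, cont01 w /\
        forall n x, 0 < x < 1 -> w x <= z n x)) :
  exists zbar : R -> R,
    unif_cv01 z zbar /\ cont01 zbar /\ C1_open01 zbar /\
    forall x, 0 < x < 1 ->
      derivable_pt_lim zbar x (h x - c - q x / zbar x) /\ zbar x < 0.
Proof.
  destruct (cont01_bounded h Hh) as [Hmax HH].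
  destruct (cont01_bounded q Hq) as [Qmax HQ].
  destruct (cv_bounded cs c Hcs) as [Cmax HC].
  assert (Hqb : forall x, 0 < x < 1 -> 0 < q x <= Qmax).
  { intros x Hx. split; [auto|]. eapply Rle_trans; [apply Rle_abs | apply HQ; lra]. }
  assert (Hdata : forall n x, 0 < x < 1 -> Rabs (h x - cs n) <= Hmax + Cmax).
  { intros n x Hx. unfold Rminus. eapply Rle_trans; [apply Rabs_triang|].
    rewrite Rabs_Ropp. apply Rplus_le_compat; [apply HH; lra | apply HC]. }
  assert (Hctl : exists u B, controlled_family z u B).
  { destruct Hcase as [[Hup [v [Hv Hvb]]] | [Hdown [w [Hw Hwb]]]].
    - exists v. exact (increasing_controlled z Hzc Hzneg v Hup Hv Hvb).
    - exists (z 0%nat). exact (decreasing_controlled z Hzc Hzneg w Hdown Hw Hwb). }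
  destruct Hctl as [u [B Hctl]].
  assert (Hequi : equicont01 z).
  { exact (riccati_equicontinuous z h q cs _ _ B Hzc Hzode Hzneg Hqb Hdata
             (uniform_bound _ _ _ Hctl)). }
  destruct (equicont_uniform_limit z Hequi (pointwise_cv _ _ _ Hctl))
    as [zb [Hunif [Hcont Hcv]]].
  assert (Hbelow := limit_below_barrier z u B zb Hctl Hcv).
  assert (Hode : forall x, 0 < x < 1 -> derivable_pt_lim zb x (h x - c - q x / zb x)).
  { intros x Hx. apply (limit_solves_ode z zb h q u cs c Qmax); auto.
    - intros y Hy. destruct (Hqb y Hy); lra.
    - exact (barrier_cont _ _ _ Hctl).
    - exact (below_barrier _ _ _ Hctl).
    - intros y Hy. exact (proj1 (Hbelow y Hy)).
    - exact (barrier_neg _ _ _ Hctl x Hx). }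
  exists zb. split; [exact Hunif|]. split; [exact Hcont|]. split.
  - exists (fun x => h x - c - q x / zb x). intros x Hx. split; [auto|].
    apply rhs_continuous; auto. apply Rlt_not_eq, Hbelow, Hx.
  - intros x Hx. split; [auto | apply Hbelow, Hx].
Qed.
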